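(* Consider the SR2 method (described in the context) applied to $\min_x F(x) := f(x) + \mathcal{R}(x)$, and suppose Assumptions (A1), (A3) and (A5) of the context hold. Let $0<\epsilon<1$ and let $t(\epsilon)$ be the first iteration with $\mathbb{E}_{\hat\xi_{t}}[\|s^\xi\|^2]\le\epsilon^2$. Then $$\mathbb{E}_{\hat\xi_{t(\epsilon)}}\big[\operatorname{dist}\big(0,\hat\partial F(x_{t(\epsilon)}+s^\xi)\big)^2\big] \le C\epsilon^2 + 3\,\mathbb{E}_{\hat\xi_{t(\epsilon)}}\big[\|\nabla f(x_{t(\epsilon)}) - g^\xi\|^2\big],$$ where $C = 3(L^2+\sigma_{\max}^2)$.
   Context: Problem: $F(x) = f(x) + \mathcal{R}(x)$ with $f(x) = \frac{1}{N}\sum_{i=1}^N f_i(x)$, $f_i:\mathbb{R}^n\to\mathbb{R}$ differentiable, and $\mathcal{R}:\mathbb{R}^n \to \mathbb{R}\cup\{\pm\infty\}$. For a nonempty sample $\xi \subseteq \{1,\dots,N\}$ set $f(x,\xi) := \frac{1}{|\xi|}\sum_{j\in\xi} f_j(x)$ and $\nabla f(x,\xi) := \frac{1}{|\xi|}\sum_{j\in\xi}\nabla f_j(x)$. A function $\mathcal{R}$ is proper if it never equals $-\infty$ and is finite somewhere; it is prox-bounded if there are $x$ and $\mu>0$ with $\inf_w \{\tfrac{1}{2}\mu^{-1}\|x-w\|^2 + \mathcal{R}(w)\} > -\infty$; the supremum of such $\mu$ is its prox-boundedness threshold. The Fréchet subdifferential $\hat\partial\phi(\bar x)$ of $\phi$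 at a point $\bar x$ where $\phi$ is finite is the set of $v$ with $\liminf_{x\to\bar x, x\ne\bar x} \frac{\phi(x)-\phi(\bar x)-v^T(x-\bar x)}{\|x-\bar x\|}\ge 0$. SR2 algorithm: parameters $0<\eta_1\le\eta_2<1$, $0<\gamma_3\le 1<\gamma_1\le\gamma_2$, a starting point $x_0$ where $\mathcal{R}$ is finite, $\sigma_0 \ge \sigma_{\min} > 0$. At iteration $t$: draw a random sample $\xi_t$, set $g_t := \nabla f(x_t,\xi_t)$, $\psi(s;x_t) := f(x_t,\xi_t) + g_t^T s + \mathcal{R}(x_t+s)$, $m(s;x_t,\sigma_t) := \psi(s;x_t) + \tfrac12\sigma_t\|s\|^2$, and compute $s_t \in \operatorname{argmin}_s m(s;x_t,\sigma_t)$ (if the sample is deemed inadequate, $s_t$ is set to $0$). Compute $\Delta F_t := F(x_t) - F(x_t+s_t)$, $\Delta\psi_t := \psi(0;x_t)-\psi(s_t;x_t)$, $\rho_t := \Delta F_t/\Delta\psi_t$ (with the convention $\rho_t = 0$ when $\Delta\psi_t = +\infty$). If $\rho_t \ge \eta_1$ (a successful iteration) set $x_{t+1} = x_t + s_t$, else $x_{t+1}=x_t$. Then choose $\sigma_{t+1} \in [\max(\sigma_{\min},\gamma_3\sigma_t),\sigma_t]$ if $\rho_t\ge\eta_2$; $\sigma_{t+1}\in[\sigma_t,\gamma_1\sigma_t]$ if $\eta_1\le\rho_t<\eta_2$; $\sigma_{t+1}\in[\gamma_1\sigma_t,\gamma_2\sigma_t]$ if $\rho_t<\eta_1$. Assumptions.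 (A1): there is $L>0$ with $\|\nabla f(x)-\nabla f(y)\|\le L\|x-y\|$ for all $x,y$; $\mathcal{R}$ is proper and lower semicontinuous everywhere, and $s\mapsto\mathcal{R}(x_t+s)$ is prox-bounded, with threshold $\lambda_{x_t}$, for every iterate $x_t$. (A3): there is $\kappa_m>0$ such that for all $t$, $|f(x_t+s_t)-f(x_t)-g_t^Ts_t| \le \kappa_m\|s_t\|^2$; moreover $\mathbb{E}_\xi[f(x_t,\xi)] = f(x_t)$ and $\mathbb{E}_\xi[g_t] = \nabla f(x_t)$. (A5): there is $\lambda>0$ with $\lambda_{x_t}\ge\lambda$ for all iterates $x_t$. Notation: $\sigma_{\max}$ is a constant with $\sigma_t\le\sigma_{\max}$ for all $t$ (e.g. $\max\{\sigma_0,\gamma_2\sigma_{\textup{succ}}\}$ with $\sigma_{\textup{succ}} := \max(2\kappa_m/(1-\eta_2),1/\lambda)$). For a sample $\xi$ drawn at iterate $x_t$, $g^\xi := \nabla f(x_t,\xi)$ and $s^\xi$ is the corresponding step; $\mathbb{E}_{\hat\xi_t}$ denotes expectation over the distribution of samples $\xi$ that yield a successful iteration given $x_t$. *)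

From HB Require Import structures.
From mathcomp Require Import all_boot all_order all_algebra.
From mathcomp Require Import all_classical all_reals all_analysis.
Set Implicit Arguments. Unset Strict Implicit. Unset Printing Implicit Defensive.
Import Order.TTheory GRing.Theory Num.Theory.
Local Open Scope ring_scope.
Local Open Scope classical_set_scope.

Section SR2Defs.
Variables (R : realType) (n N : nat).
Notation vec := 'rV[R]_n.

Definition dotv (u v : vec) : R := \sum_(i < n) u ord0 i * v ord0 i.
Definition enorm (u : vec) : R := Num.sqrt (dotv u u).

Definition has_gradient (h : vec -> R) (gh : vec -> vec) : Prop :=
  forall x, forall e, 0 < e -> exists2 d, 0 < d & forall y, enorm (y - x) < d ->
    `|h y - h x - dotv (gh x) (y - x)| <= e * enorm (y - x).

Definition fsample (fs : 'I_N -> vec -> R) (xi : {set 'I_N}) (x : vec) : R :=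
  (#|xi|%:R)^-1 * \sum_(j in xi) fs j x.
Definition gsample (gs : 'I_N -> vec -> vec) (xi : {set 'I_N}) (x : vec) : vec :=
  (#|xi|%:R)^-1 *: \sum_(j in xi) gs j x.
Definition favg (fs : 'I_N -> vec -> R) (x : vec) : R :=
  (N%:R)^-1 * \sum_(j < N) fs j x.
Definition gavg (gs : 'I_N -> vec -> vec) (x : vec) : vec :=
  (N%:R)^-1 *: \sum_(j < N) gs j x.

Definition Ffun (fs : 'I_N -> vec -> R) (Rg : vec -> \bar R) (x : vec) : \bar R :=
  ((favg fs x)%:E + Rg x)%E.

Definition proper_fun (phi : vec -> \bar R) : Prop :=
  (forall x, phi x != -oo%E) /\ (exists x, phi x \is a fin_num).

Definition lsc_fun (phi : vec -> \bar R) : Prop :=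
  forall x (a : R), (a%:E < phi x)%E ->
    exists2 d, 0 < d & forall y, enorm (y - x) < d -> (a%:E < phi y)%E.

Definition prox_bounded_at (phi : vec -> \bar R) (x : vec) (mu : R) : Prop :=
  (-oo < ereal_inf [set ((2^-1 * mu^-1 * enorm (x - w) ^+ 2)%:E + phi w)%E | w in setT])%E.
Definition prox_bounded (phi : vec -> \bar R) : Prop :=
  exists x mu, 0 < mu /\ prox_bounded_at phi x mu.
Definition prox_threshold (phi : vec -> \bar R) : \bar R :=
  ereal_sup [set mu%:E | mu in [set mu | 0 < mu /\ exists x, prox_bounded_at phi x mu]].

Definition psi (fs : 'I_N -> vec -> R) (gs : 'I_N -> vec -> vec) (Rg : vec -> \bar R)
    (xi : {set 'I_N}) (x s : vec) : \bar R :=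
  ((fsample fs xi x + dotv (gsample gs xi x) s)%:E + Rg (x + s)%R)%E.
Definition model fs gs Rg xi x (sigma : R) (s : vec) : \bar R :=
  (psi fs gs Rg xi x s + (sigma / 2 * enorm s ^+ 2)%:E)%E.

Definition rho fs gs Rg (xi : {set 'I_N}) (x s : vec) : \bar R :=
  let dF := (Ffun fs Rg x - Ffun fs Rg (x + s)%R)%E in
  let dpsi := (psi fs gs Rg xi x 0%R - psi fs gs Rg xi x s)%E in
  if dpsi == +oo%E then 0%E else (dF * ((fine dpsi)^-1)%:E)%E.

(* Frechet subdifferential (empty where phi is not finite) *)
Definition frechet_subdiff (phi : vec -> \bar R) (xb : vec) : set vec :=
  [set v | phi xb \is a fin_num /\
     forall e, 0 < e -> exists2 d, 0 < d & forall y, 0 < enorm (y - xb) < d ->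
       ((fine (phi xb) + dotv v (y - xb) - e * enorm (y - xb))%:E <= phi y)%E].

(* dist(0, S) (= +oo if S empty) and its square *)
Definition dist0 (S : set vec) : \bar R := ereal_inf [set (enorm v)%:E | v in S].
Definition dist0_sq (S : set vec) : \bar R := (dist0 S * dist0 S)%E.

Definition Econd (p : {set 'I_N} -> R) (S : pred {set 'I_N}) (X : {set 'I_N} -> R) : R :=
  (\sum_(xi | S xi) p xi * X xi) / (\sum_(xi | S xi) p xi).
Definition EcondE (p : {set 'I_N} -> R) (S : pred {set 'I_N}) (X : {set 'I_N} -> \bar R)
  : \bar R :=
  ((\sum_(xi | S xi) ((p xi)%:E * X xi)) * ((\sum_(xi | S xi) p xi)^-1)%:E)%E.

End SR2Defs.

(* At a successful iteration the step [s] minimises the model, so the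
   first-order optimality condition of the model, combined with the
   differentiability of [f], puts
     [v = grad f (x + s) - g - sigma s]
   in the Fréchet subdifferential of [F] at [x + s].  Writing
     [v = (grad f (x + s) - grad f x) + (grad f x - g) - sigma s],
   the inequality [|a + b + c|^2 <= 3 (|a|^2 + |b|^2 + |c|^2)], the Lipschitz
   continuity of [grad f] and [0 <= sigma <= sigma_max] bound
   [dist(0, subdiff F (x + s))^2] by
   [3 (L^2 + sigma_max^2) |s|^2 + 3 |grad f x - g|^2]; averaging over the
   successful samples and using [E |s|^2 <= eps^2] at [t(eps)] concludes. *)

From HB Require Import structures.
From mathcomp Require Import all_boot all_order all_algebra.
From mathcomp Require Import all_classical all_reals all_analysis.
From mathcomp Require Import lra ring.
Import Order.TTheory GRing.Theory Num.Theory.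
Local Open Scope ring_scope.

Set Implicit Arguments. Unset Strict Implicit.

Section Euclidean.
Variables (R : realType) (n : nat).
Local Notation vec := 'rV[R]_n.

Lemma dotvC (u v : vec) : dotv u v = dotv v u.
Proof. by apply: eq_bigr => i _; rewrite mulrC. Qed.

Lemma dotvDl (u v w : vec) : dotv (u + v) w = dotv u w + dotv v w.
Proof. by rewrite /dotv -big_split; apply: eq_bigr => i _; rewrite mxE mulrDl. Qed.

Lemma dotvDr (u v w : vec) : dotv w (u + v) = dotv w u + dotv w v.
Proof. by rewrite dotvC dotvDl !(dotvC w). Qed.

Lemma dotvZl a (u w : vec) : dotv (a *: u) w = a * dotv u w.
Proof. by rewrite /dotv mulr_sumr; apply: eq_bigr => i _; rewrite mxE mulrA. Qed.

Lemma dotvBl (u v w : vec) : dotv (u - v) w = dotv u w - dotv v w.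
Proof. by rewrite -scaleN1r dotvDl dotvZl mulN1r. Qed.

Lemma dotv_suml (I : finType) (F : I -> vec) (w : vec) :
  dotv (\sum_i F i) w = \sum_i dotv (F i) w.
Proof.
apply: (big_morph (fun u => dotv u w) (fun u v => dotvDl u v w)).
by rewrite /dotv big1 // => i _; rewrite mxE mul0r.
Qed.

Lemma dotvv_ge0 (u : vec) : 0 <= dotv u u.
Proof. by apply: sumr_ge0 => i _; rewrite -expr2 sqr_ge0. Qed.

Lemma enorm_ge0 (u : vec) : 0 <= enorm u.
Proof. exact: sqrtr_ge0. Qed.

Lemma enorm_sqr (u : vec) : enorm u ^+ 2 = dotv u u.
Proof. by rewrite sqr_sqrtr // dotvv_ge0. Qed.

Lemma enormZ a (u : vec) : enorm (a *: u) = `|a| * enorm u.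
Proof.
by rewrite /enorm dotvZl dotvC dotvZl mulrA -expr2 sqrtrM ?sqr_ge0 // sqrtr_sqr.
Qed.

Lemma enorm_sqrD (u v : vec) :
  enorm (u + v) ^+ 2 = enorm u ^+ 2 + 2 * dotv u v + enorm v ^+ 2.
Proof. by rewrite !enorm_sqr !dotvDl !dotvDr (dotvC v u); ring. Qed.

Lemma enorm_sqrD3 (a b c : vec) :
  enorm (a + b + c) ^+ 2 <= 3 * (enorm a ^+ 2 + enorm b ^+ 2 + enorm c ^+ 2).
Proof.
rewrite !enorm_sqr /dotv -!big_split /= mulr_sumr; apply: ler_sum => i _.
rewrite !mxE; set A := a ord0 i; set B := b ord0 i; set C := c ord0 i.
have := sqr_ge0 (A - B); have := sqr_ge0 (B - C); have := sqr_ge0 (A - C).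
rewrite !expr2; nra.
Qed.

Lemma ball_fin_forall (I : finType) (x : vec) (Q : I -> vec -> Prop) :
  (forall i, exists2 d, 0 < d & forall y, enorm (y - x) < d -> Q i y) ->
  exists2 d, 0 < d & forall y, enorm (y - x) < d -> forall i, Q i y.
Proof.
move=> balls; have /choice[d d_ball] : forall i, exists d,
    0 < d /\ forall y, enorm (y - x) < d -> Q i y.
  by move=> i; have [d d_gt0 dQ] := balls i; exists d.
exists (\big[Num.min/1]_i d i).
  by apply: lt_bigmin => // i _; case: (d_ball i).
move=> y yx i; apply: (d_ball i).2.
exact: lt_le_trans yx (bigmin_le _ _ _).
Qed.

Lemma has_gradient_favg N (fs : 'I_N -> vec -> R) (gs : 'I_N -> vec -> vec) :
  (forall i, has_gradient (fs i) (gs i)) -> has_gradient (favg fs) (gavg gs).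
Proof.
move=> grad x e e_gt0.
have [d d_gt0 dfs] := ball_fin_forall (fun i => grad i x e e_gt0).
exists d => // y /dfs near_x.
rewrite /favg /gavg dotvZl dotv_suml -!mulrBr -!sumrB normrM.
rewrite ger0_norm ?invr_ge0 //.
apply: le_trans (_ : N%:R^-1 * \sum_(i < N) e * enorm (y - x) <= _).
  rewrite ler_wpM2l ?invr_ge0 //.
  exact: le_trans (ler_norm_sum _ _ _) (ler_sum _ (fun i _ => near_x i)).
rewrite sumr_const card_ord -[e * _ *+ N]mulr_natl.
have [->|N_neq0] := eqVneq N 0%N; last by rewrite mulKf ?pnatr_eq0.
by rewrite invr0 mul0r mulr_ge0 ?enorm_ge0 ?ltW.
Qed.

End Euclidean.

Section Subdifferential.
Variables (R : realType) (n : nat).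
Local Notation vec := 'rV[R]_n.

Lemma dist0_sq_le (S : set vec) (v : vec) :
  S v -> (dist0_sq S <= (enorm v ^+ 2)%:E)%E.
Proof.
move=> Sv; have d_ge0 : (0 <= dist0 S)%E.
  by apply/ereal_infP => _ [w _ <-]; rewrite lee_fin enorm_ge0.
have d_le : (dist0 S <= (enorm v)%:E)%E by apply: ereal_inf_lbound; exists v.
by rewrite expr2 EFinM; apply: lee_pmul.
Qed.

Lemma prox_minimizer_subdiff (h : vec -> R) (gh : vec -> vec)
    (Rg : vec -> \bar R) (c sig : R) (g x s : vec) :
  has_gradient h gh -> (forall y, Rg y != -oo%E) -> Rg (x + s) \is a fin_num ->
  (forall s', ((c + dotv g s)%:E + Rg (x + s)%R + (sig / 2 * enorm s ^+ 2)%:E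
               <= (c + dotv g s')%:E + Rg (x + s')%R + (sig / 2 * enorm s' ^+ 2)%:E)%E) ->
  frechet_subdiff (fun y => (h y)%:E + Rg y)%E (x + s) (gh (x + s) - g - sig *: s).
Proof.
move=> h_grad Rg_ninf Rs_fin s_min; split; first by rewrite fin_numD Rs_fin.
move=> e e_gt0; have e2_gt0 : 0 < e / 2 by rewrite divr_gt0.
have sig1_gt0 : 0 < `|sig| + 1 by rewrite ltr_wpDl.
have [d d_gt0 h_lin] := h_grad (x + s) _ e2_gt0.
(* Comparing the model at [s] and at [y - x] bounds [Rg y] from below; on the
   ball of radius [e / (|sig| + 1)] the quadratic remainder [sig/2 |u|^2] is
   absorbed by [e/2 |u|], whatever the sign of [sig]. *)
exists (Num.min d (e / (`|sig| + 1))); first by rewrite lt_min d_gt0 divr_gt0.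
move=> y /andP[_]; rewrite lt_min => /andP[/h_lin + y_near].
rewrite ler_norml => /andP[h_lower _].
case Ry: (Rg y) => [r| |]; last 2 first.
- by rewrite addey // leey.
- by move: (Rg_ninf y); rewrite Ry.
have := s_min (y - x); rewrite [x + (y - x)]addrC subrK Ry.
rewrite -(fineK Rs_fin) -!EFinD !lee_fin /= => Rg_lower.
move: y_near h_lower Rg_lower; rewrite (_ : y - x = s + (y - (x + s))); last first.
  by rewrite [RHS]addrC opprD addrA subrK.
move: (y - (x + s)) => u; rewrite ltr_pdivlMr // => u_small h_lower Rg_lower.
have sig_u : sig * enorm u ^+ 2 <= e * enorm u.
  have := enorm_ge0 u; have := ler_norm sig; rewrite expr2; nra.
rewrite enorm_sqrD dotvDr in Rg_lower; rewrite !dotvBl dotvZl.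
lra.
Qed.

Lemma dist0_sq_step_le N (fs : 'I_N -> vec -> R) (gs : 'I_N -> vec -> vec)
    (Rg : vec -> \bar R) (smp : {set 'I_N}) (x s : vec) (sig sig_max L : R) :
  has_gradient (favg fs) (gavg gs) ->
  (forall y z, enorm (gavg gs y - gavg gs z) <= L * enorm (y - z)) ->
  (forall y, Rg y != -oo%E) -> Rg (x + s) \is a fin_num -> 0 <= sig <= sig_max ->
  (forall s', (model fs gs Rg smp x sig s <= model fs gs Rg smp x sig s')%E) ->
  (dist0_sq (frechet_subdiff (Ffun fs Rg) (x + s))
   <= (3 * (L ^+ 2 + sig_max ^+ 2) * enorm s ^+ 2
       + 3 * enorm (gavg gs x - gsample gs smp x) ^+ 2)%:E)%E.
Proof.
move=> f_grad lipschitz Rg_ninf Rs_fin /andP[sig_ge0 sig_le] s_min.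
apply: le_trans (dist0_sq_le (prox_minimizer_subdiff f_grad Rg_ninf Rs_fin s_min)) _.
set df := gavg gs (x + s) - gavg gs x; set dg := gavg gs x - gsample gs smp x.
rewrite lee_fin (_ : _ - _ - _ = df + dg + (- sig) *: s); last first.
  by rewrite scaleNr /df /dg addrA subrK.
apply: le_trans (enorm_sqrD3 _ _ _) _.
rewrite enormZ exprMn real_normK ?num_real //.
have df_le : enorm df ^+ 2 <= L ^+ 2 * enorm s ^+ 2.
  have := lipschitz (x + s) x; rewrite addrAC subrr add0r -exprMn => df_le.
  by rewrite ler_sqr ?nnegrE ?enorm_ge0 // (le_trans (enorm_ge0 _) df_le).
have sig_sqr : sig ^+ 2 * enorm s ^+ 2 <= sig_max ^+ 2 * enorm s ^+ 2.
  by rewrite ler_wpM2r ?sqr_ge0 // ler_sqr ?nnegrE // (le_trans sig_ge0).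
lra.
Qed.

End Subdifferential.

Lemma rho_gt0_step (R : realType) n N (fs : 'I_N -> 'rV[R]_n -> R) gs Rg
    (smp : {set 'I_N}) (x s : 'rV[R]_n) :
  (0 < rho fs gs Rg smp x s)%E -> s != 0 /\ Rg (x + s) \is a fin_num.
Proof.
rewrite /rho; case dpsi: (psi fs gs Rg smp x 0 - psi fs gs Rg smp x s)%E => [r| |];
  rewrite /= ?invr0 ?mule0 ?ltxx // => rho_gt0.
have r_neq0 : r != 0 by apply: contraTneq rho_gt0 => ->; rewrite invr0 mule0 ltxx.
have : (psi fs gs Rg smp x 0 - psi fs gs Rg smp x s)%E \is a fin_num by rewrite dpsi.
rewrite fin_numB => /andP[psi0_fin psis_fin]; split.
- by apply: contraNneq r_neq0 => s0; move: dpsi; rewrite s0 subee // => -[<-].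
- by move: psis_fin; rewrite /psi fin_numD => /andP[].
Qed.

Section ConditionalExpectation.
Variables (R : realType) (N : nat) (p : {set 'I_N} -> R) (S : pred {set 'I_N}).

Lemma EcondE_le_Econd (X : {set 'I_N} -> \bar R) (Y : {set 'I_N} -> R) :
  (forall smp, 0 <= p smp) -> (forall smp, S smp -> (X smp <= (Y smp)%:E)%E) ->
  (EcondE p S X <= (Econd p S Y)%:E)%E.
Proof.
move=> p_ge0 XY; rewrite /EcondE /Econd EFinM lee_wpmul2r ?lee_fin ?invr_ge0 ?sumr_ge0 //.
rewrite -sumEFin; apply: lee_sum => smp /XY; rewrite EFinM.
by apply: lee_wpmul2l; rewrite lee_fin.
Qed.

Lemma Econd_lin (a b : R) (X Y : {set 'I_N} -> R) :
  Econd p S (fun smp => a * X smp + b * Y smp)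
  = a * Econd p S X + b * Econd p S Y.
Proof.
rewrite /Econd !mulrA -mulrDl !mulr_sumr -big_split; congr (_ / _).
by apply: eq_bigr => smp _; rewrite mulrDr [p smp * (a * _)]mulrCA [p smp * (b * _)]mulrCA.
Qed.

End ConditionalExpectation.

Definition sigma_update (R : realType) (eta1 eta2 gamma1 gamma2 gamma3 sigma_min : R)
    (r : \bar R) (sig sig' : R) : Prop :=
  ((eta2%:E <= r)%E -> Num.max sigma_min (gamma3 * sig) <= sig' <= sig) /\
  ((eta1%:E <= r)%E -> (r < eta2%:E)%E -> sig <= sig' <= gamma1 * sig) /\
  ((r < eta1%:E)%E -> gamma1 * sig <= sig' <= gamma2 * sig).

Lemma sigma_update_ge (R : realType) (eta1 eta2 gamma1 gamma2 gamma3 sigma_min : R)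
    (r : \bar R) (sig sig' : R) :
  0 <= sigma_min -> 1 <= gamma1 -> sigma_min <= sig ->
  sigma_update eta1 eta2 gamma1 gamma2 gamma3 sigma_min r sig sig' -> sigma_min <= sig'.
Proof.
move=> smin_ge0 gamma1_ge1 sig_ge [very_succ [succ unsucc]].
have [r_ge1|r_lt1] := leP eta1%:E r; last first.
  have /andP[+ _] := unsucc r_lt1; apply: le_trans.
  by rewrite (le_trans sig_ge) // ler_peMl // (le_trans smin_ge0).
have [r_ge2|r_lt2] := leP eta2%:E r.
  by have /andP[+ _] := very_succ r_ge2; apply: le_trans; rewrite le_max lexx.
by have /andP[+ _] := succ r_ge1 r_lt2; apply: le_trans.
Qed.

Theorem theorem4 (R : realType) (n N : nat)
  (fs : 'I_N -> 'rV[R]_n -> R) (gs : 'I_N -> 'rV[R]_n -> 'rV[R]_n)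
  (Rg : 'rV[R]_n -> \bar R)
  (eta1 eta2 gamma1 gamma2 gamma3 sigma_min : R)
  (x : nat -> 'rV[R]_n) (sigma : nat -> R)
  (p : nat -> {set 'I_N} -> R) (xi : nat -> {set 'I_N})
  (adequate : nat -> {set 'I_N} -> bool) (step : nat -> {set 'I_N} -> 'rV[R]_n)
  (L kappa_m lambda sigma_max eps : R) (teps : nat) :
  (* differentiability of the f_i, with gradients gs i *)
  (forall i, has_gradient (fs i) (gs i)) ->
  (* algorithm parameters *)
  0 < eta1 -> eta1 <= eta2 -> eta2 < 1 ->
  0 < gamma3 -> gamma3 <= 1 -> 1 < gamma1 -> gamma1 <= gamma2 ->
  0 < sigma_min -> sigma_min <= sigma 0 ->
  Rg (x 0) \is a fin_num ->
  (* sampling distribution at iteration t (over nonempty samples) and drawn sample *)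
  (forall t smp, 0 <= p t smp) -> (forall t, \sum_(smp : {set 'I_N}) p t smp = 1) ->
  (forall t smp, 0 < p t smp -> smp != finset.set0) ->
  (forall t, 0 < p t (xi t)) ->
  (* step s^xi computed at iterate x_t for sample xi: a minimizer of the model,
     or 0 if the sample is deemed inadequate *)
  (forall t smp, adequate t smp ->
     forall s, (model fs gs Rg smp (x t) (sigma t) (step t smp)
                <= model fs gs Rg smp (x t) (sigma t) s)%E) ->
  (forall t smp, ~~ adequate t smp -> step t smp = 0) ->
  (* iterate update *)
  (forall t, x t.+1 = if (eta1%:E <= rho fs gs Rg (xi t) (x t) (step t (xi t)))%E
                      then x t + step t (xi t) else x t) ->
  (* regularization parameter update *)
  (forall t, let r := rho fs gs Rg (xi t) (x t) (step t (xi t)) in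
     ((eta2%:E <= r)%E -> Num.max sigma_min (gamma3 * sigma t) <= sigma t.+1 <= sigma t) /\
     ((eta1%:E <= r)%E -> (r < eta2%:E)%E -> sigma t <= sigma t.+1 <= gamma1 * sigma t) /\
     ((r < eta1%:E)%E -> gamma1 * sigma t <= sigma t.+1 <= gamma2 * sigma t)) ->
  (* (A1) *)
  0 < L ->
  (forall y z, enorm (gavg gs y - gavg gs z) <= L * enorm (y - z)) ->
  proper_fun Rg -> lsc_fun Rg ->
  (forall t, prox_bounded (fun s => Rg (x t + s))) ->
  (* (A3) *)
  0 < kappa_m ->
  (forall t, `|favg fs (x t + step t (xi t)) - favg fs (x t)
               - dotv (gsample gs (xi t) (x t)) (step t (xi t))|
             <= kappa_m * enorm (step t (xi t)) ^+ 2) ->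
  (forall t, \sum_(smp : {set 'I_N}) p t smp * fsample fs smp (x t) = favg fs (x t)) ->
  (forall t, \sum_(smp : {set 'I_N}) p t smp *: gsample gs smp (x t) = gavg gs (x t)) ->
  (* (A5) *)
  0 < lambda ->
  (forall t, (lambda%:E <= prox_threshold (fun s => Rg (x t + s)%R))%E) ->
  (* sigma_max *)
  (forall t, sigma t <= sigma_max) ->
  (* epsilon and t(epsilon): first iteration with E_succ[||s^xi||^2] <= eps^2 *)
  0 < eps -> eps < 1 ->
  Econd (p teps) (fun smp => (eta1%:E <= rho fs gs Rg smp (x teps) (step teps smp))%E)
        (fun smp => enorm (step teps smp) ^+ 2) <= eps ^+ 2 ->
  (forall t, (t < teps)%N ->
     eps ^+ 2 < Econd (p t) (fun smp => (eta1%:E <= rho fs gs Rg smp (x t) (step t smp))%E)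
                      (fun smp => enorm (step t smp) ^+ 2)) ->
  (EcondE (p teps) (fun smp => (eta1%:E <= rho fs gs Rg smp (x teps) (step teps smp))%E)
     (fun smp => dist0_sq (frechet_subdiff (Ffun fs Rg) (x teps + step teps smp)))
   <= (3 * (L ^+ 2 + sigma_max ^+ 2) * eps ^+ 2
       + 3 * Econd (p teps) (fun smp => (eta1%:E <= rho fs gs Rg smp (x teps) (step teps smp))%E)
               (fun smp => enorm (gavg gs (x teps) - gsample gs smp (x teps)) ^+ 2))%:E)%E.
Proof.
move=> grad_fs eta1_gt0 _ _ _ _ gamma1_gt1 _ smin_gt0 smin_le_sigma0 _ p_ge0 _ _ _
  step_min step_inadequate _ sigma_upd _ lipschitz [Rg_ninf _] _ _ _ _ _ _ _ _
  sigma_le_max _ _ step_small _.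
have sigma_ge_min t : sigma_min <= sigma t.
  elim: t => // t IH.
  exact: sigma_update_ge (ltW smin_gt0) (ltW gamma1_gt1) IH (sigma_upd t).
have f_grad := has_gradient_favg grad_fs.
set succ := fun smp => (eta1%:E <= rho fs gs Rg smp (x teps) (step teps smp))%E.
have succ_bound smp : succ smp ->
    (dist0_sq (frechet_subdiff (Ffun fs Rg) (x teps + step teps smp))
     <= (3 * (L ^+ 2 + sigma_max ^+ 2) * enorm (step teps smp) ^+ 2
         + 3 * enorm (gavg gs (x teps) - gsample gs smp (x teps)) ^+ 2)%:E)%E.
  move=> /(lt_le_trans (eta1_gt0 : 0 < eta1%:E)%E) /rho_gt0_step[step_neq0 Rs_fin].
  have adequate_smp : adequate teps smp.
    by apply: contraNT step_neq0 => /step_inadequate ->.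
  apply: dist0_sq_step_le f_grad lipschitz Rg_ninf Rs_fin _ (step_min _ _ adequate_smp).
  by rewrite (le_trans (ltW smin_gt0)) ?sigma_ge_min ?sigma_le_max.
apply: le_trans (EcondE_le_Econd (p_ge0 teps) succ_bound) _.
rewrite lee_fin Econd_lin lerD2r ler_wpM2l ?mulr_ge0 ?addr_ge0 ?sqr_ge0 //.
Qed.
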